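(* Let $\underline{X}$ be an observation from a distribution $P_{(\theta,\underline{\eta})}$ indexed by $(\theta,\underline{\eta})$ in a parameter space $H$, with real parameter of interest $\theta$ ranging over $[A,B]$ (possibly $A=-\infty$ or $B=+\infty$), and fix $\alpha\in[0,1]$. For an upper one-sided confidence interval $C(\underline{X})=[A,U(\underline{X})]$, define its modification $C^M$ by $$h(\underline{x},\theta_0)=\sup_{(\theta,\underline{\eta})\in H,\ \theta\ge\theta_0}P_{(\theta,\underline{\eta})}\big(U(\underline{X})\le U(\underline{x})\big),\qquad C^M(\underline{x})=\overline{\{\theta_0: h(\underline{x},\theta_0)>\alpha\}}$$ (this is the h-function of the test statistic $U(\underline{x})-\theta_0$ for $H_0:\theta\ge\theta_0$). Let $C_u(\underline{X})=[A,U_u(\underline{X})]$ be an upper one-sided confidence interval of any level, let $C_u^{M1}=C_u^M$, $C_u^{M(k+1)}=(C_u^{Mk})^M$, and $C_u^{M\infty}=\bigcap_{k\ge1}C_u^{Mk}$. Then: (i) $C_u^M(\underline{X})$ is of level $1-\alpha$, i.e. $\inf_{(\theta,\underline{\eta})\in H}P_{(\theta,\underline{\eta})}(\theta\in C_u^M(\underline{X}))\ge1-\alpha$; (ii) $C_u^{M\infty}(\underline{X})=C_u^M(\underline{X})$; (iii) writing $C_u^M(\underline{X})=[A,U_u^M(\underline{X})]$, $C_u^M$ is the smallest interval in the class $\mathcal{C}_u$ of all $1-\alpha$ exact upper one-sided intervals $C(\underline{X})=[A,U(\underline{X})]$ such that $U(\underline{x}')\le U(\underline{x})$ whenever $U_u(\underline{x}')\le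 U_u(\underline{x})$, for all $\underline{x}',\underline{x}$; i.e. for any $C=[A,U]\in\mathcal{C}_u$, $U_u^M(\underline{X})\le U(\underline{X})$.
   Context: For a set $A'$ of parameter values, $\overline{A'}$ denotes the smallest closed simply connected set (closed interval) containing $A'$. An interval $C(\underline{X})$ for $\theta$ is ''$1-\alpha$ exact'' if $\inf_{(\theta,\underline{\eta})\in H}P_{(\theta,\underline{\eta})}(\theta\in C(\underline{X}))\ge1-\alpha$. *)

From HB Require Import structures.
From mathcomp Require Import all_boot all_order all_algebra.
From mathcomp Require Import all_classical all_reals all_analysis.
From mathcomp Require Import measurable_realfun.
Set Implicit Arguments. Unset Strict Implicit. Unset Printing Implicit Defensive.
Import Order.TTheory GRing.Theory Num.Theory.
Import numFieldNormedType.Exports.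
Local Open Scope classical_set_scope.
Local Open Scope ring_scope.

Section Modification.
Context (d : measure_display) (T : measurableType d) (R : realType)
  (Par : Type) (H : set Par) (theta : Par -> R) (P : Par -> probability T R)
  (A B : \bar R) (alpha : R).

Definition upper_int (U : T -> \bar R) (x : T) : set R :=
  [set t : R | (A <= t%:E)%E /\ (t%:E <= U x)%E].

Definition hfun (U : T -> \bar R) (x : T) (t0 : R) : \bar R :=
  ereal_sup [set P p [set y | (U y <= U x)%E] | p in [set p | H p /\ t0 <= theta p]].

Definition hullc (S : set R) : set R :=
  @closure R^o [set t : R | exists a b, S a /\ S b /\ a <= t <= b].

Definition modif (U : T -> \bar R) (x : T) : set R :=
  hullc [set t0 : R | (A <= t0%:E)%E /\ (t0%:E <= B)%E /\ (alpha%:E < hfun U x t0)%E].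

(* upper endpoint U^M of C^M = [A, U^M] (-oo if C^M(x) is empty) *)
Definition modif_ub (U : T -> \bar R) (x : T) : \bar R :=
  ereal_sup [set t%:E | t in modif U x].

Fixpoint modif_iter (U : T -> \bar R) (k : nat) : T -> \bar R :=
  match k with
  | O => U
  | S k' => modif_ub (modif_iter U k')
  end.

Definition exact_upper (U : T -> \bar R) : Prop :=
  ((1 - alpha)%:E <= ereal_inf [set P p [set x | upper_int U x (theta p)] | p in H])%E.

Definition class_u (Uu U : T -> \bar R) : Prop :=
  measurable_fun setT U /\ exact_upper U /\
  (forall x' x, (Uu x' <= Uu x)%E -> (U x' <= U x)%E).

End Modification.

From HB Require Import structures.
From mathcomp Require Import all_boot all_order all_algebra.
From mathcomp Require Import all_classical all_reals all_analysis.
From mathcomp Require Import measurable_realfun.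
Set Implicit Arguments.
Unset Strict Implicit.
Unset Printing Implicit Defensive.

Import Order.TTheory GRing.Theory Num.Theory.
Import numFieldNormedType.Exports.
Local Open Scope classical_set_scope.
Local Open Scope ring_scope.

(** Everything rests on one fact about the statistic [Uu]: under any [p],
    the event [P_p(Uu <= Uu(X)) <= alpha] has probability at most [alpha].
    That event is a lower set for the preorder induced by [Uu], hence either
    a sublevel set [Uu <= Uu y] with [y] in it, or an increasing union of such
    sublevel sets, each of probability at most [alpha].  Outside it,
    [h(X, theta_p) > alpha], which gives the coverage (i).  Conversely, if an
    exact interval [[A, U]] monotone in [Uu] had [U(x) < t0 <= theta_p], its
    coverage at [p] would force [P_p(Uu <= Uu(x)) <= alpha], so
    [h(x, t0) <= alpha]: this is the minimality (iii).  Every iterate is again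
    monotone in [Uu], so its sublevel sets contain those of [Uu], its h-function
    is larger and its modification contains [C_u^M]; as the iterate of index
    [0] is [Uu] itself, the intersection in (ii) is [C_u^M]. *)

Lemma ereal_lt_nondecreasing_seq (R : realType) (c : \bar R) : c != -oo%E ->
  exists u : (\bar R)^nat, [/\ nondecreasing_seq u, forall n, (u n < c)%E &
    forall e, (e < c)%E -> exists n, (e <= u n)%E].
Proof.
case: c => [r| |] // _.
- exists (fun n => (r - n.+1%:R^-1)%:E); split.
  + move=> n m nm; rewrite lee_fin lerD2l lerN2.
    by rewrite lef_pV2 ?posrE // ler_nat.
  + by move=> n; rewrite lte_fin gtrBl invr_gt0.
  + case=> [s| |] //; last by exists 0%N; exact: leNye.
    rewrite lte_fin => /ltr_add_invr [k sk]; exists k.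
    by rewrite lee_fin lerBrDr ltW.
- exists (fun n => n%:R%:E); split.
  + by move=> n m nm; rewrite lee_fin ler_nat.
  + by move=> n; exact: ltry.
  + case=> [s| |] //; last by exists 0%N; exact: leNye.
    move=> _; exists (Num.bound `|s|); rewrite lee_fin.
    exact: le_trans (ler_norm s) (ltW (archi_boundP (normr_ge0 s))).
Qed.

Section lower_sets.
Local Open Scope ereal_scope.
Context d (T : measurableType d) (R : realType) (f : T -> \bar R).

Definition lower_set (S : set T) := forall y y', S y -> f y' <= f y -> S y'.

Definition upper_set (S : set T) := forall y y', S y -> f y <= f y' -> S y'.

Definition monotone_wrt (g : T -> \bar R) := forall x' x, f x' <= f x -> g x' <= g x.

Lemma monotone_wrt_refl : monotone_wrt f.
Proof. by []. Qed.

Lemma upper_setC S : upper_set S -> lower_set (~` S).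
Proof. by move=> uS y y' nSy le Sy'; exact/nSy/(uS _ _ Sy' le). Qed.

Lemma lower_setE S : lower_set S ->
  (exists2 y, S y & S = [set x | f x <= f y]) \/
  S = [set x | f x < ereal_sup (f @` S)].
Proof.
move=> lS; set c := ereal_sup _.
have ub z : S z -> f z <= c by move=> Sz; apply: ereal_sup_ubound; exists z.
have [[y Sy fyc]|Nmax] := pselect (exists2 y, S y & f y = c); [left|right].
  exists y => //; apply/seteqP; split => z /=; last exact: lS.
  by rewrite fyc; exact: ub.
apply/seteqP; split => z /=.
  move=> Sz; rewrite lt_neqAle ub // andbT; apply/eqP => fzc.
  by apply: Nmax; exists z.
by move=> /ereal_sup_gt [_ [y Sy <-] /ltW]; exact: lS.
Qed.

Hypothesis mf : measurable_fun setT f.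

Lemma measurable_sublevel e : measurable [set x | f x <= e].
Proof. by rewrite -[X in measurable X]setTI; exact: emeasurable_fun_infty_c. Qed.

Lemma lower_set_measurable S : lower_set S -> measurable S.
Proof.
move=> /lower_setE [[y _ ->]|->]; first exact: measurable_sublevel.
by rewrite -[X in measurable X]setTI; exact: emeasurable_fun_infty_o.
Qed.

Lemma upper_set_measurable S : upper_set S -> measurable S.
Proof.
by move=> /upper_setC /lower_set_measurable /measurableC; rewrite setCK.
Qed.

Lemma monotone_wrt_measurable g : monotone_wrt g -> measurable_fun setT g.
Proof.
move=> gf; apply: (measurability _ (ErealGenOInfty.measurableE R)) => //.
move=> _ [_ [e ->] <-]; rewrite setTI; apply: upper_set_measurable.
move=> y y' /=; rewrite !in_itv /= !andbT => ey le.
exact: lt_le_trans ey (gf _ _ le).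
Qed.

Lemma measure_lower_set_le (mu : {measure set T -> \bar R}) (D : set T)
    (a : \bar R) : 0 <= a -> lower_set D ->
  (forall y, D y -> mu [set x | f x <= f y] <= a) -> mu D <= a.
Proof.
move=> a0 lD muD; have mD := lower_set_measurable lD.
have [[y Dy ->]|DE] := lower_setE lD; first exact: muD.
set c := ereal_sup _ in DE.
have [cNy|cNy] := eqVneq c -oo.
  by rewrite DE cNy (_ : [set _ | _] = set0) ?measure0 // -subset0 => x /=;
    rewrite ltNge leNye.
have [u [ndu uc cu]] := ereal_lt_nondecreasing_seq cNy.
pose F n := [set x | f x <= u n].
have DF : D = \bigcup_n F n.
  rewrite DE; apply/seteqP; split => x /=; first by move=> /cu [n]; exists n.
  by move=> [n _ /= fxu]; exact: le_lt_trans fxu (uc n).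
have ndF : nondecreasing_seq F.
  by move=> n m nm; apply/subsetPset => x /= fxu; exact: le_trans fxu (ndu _ _ nm).
have muF n : mu (F n) <= a.
  have /ereal_sup_gt [_ [y Dy <-] /ltW unfy] := uc n.
  apply: le_trans (muD _ Dy); apply: le_measure; rewrite ?inE.
  - exact: measurable_sublevel.
  - exact: measurable_sublevel.
  - by move=> x /= fxu; exact: le_trans fxu unfy.
have mF n : measurable (F n) := measurable_sublevel (u n).
have mUF : measurable (\bigcup_n F n) by rewrite -DF.
have cvF := nondecreasing_cvg_mu (mu := mu) mF mUF ndF.
rewrite DF -(cvg_lim _ cvF) //; apply: lime_le; last exact: nearW.
by apply/cvg_ex; eexists; exact: cvF.
Qed.

End lower_sets.

Lemma probability_setC_ge d (T : measurableType d) (R : realType)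
    (mu : probability T R) (S : set T) (a : R) : measurable S ->
  ((1 - a)%:E <= mu (~` S))%E = (mu S <= a%:E)%E.
Proof.
move=> mS; rewrite probability_setC // -(fineK (fin_num_measure mu _ mS)).
by rewrite -EFinB !lee_fin lerD2l lerN2.
Qed.

Section hullc.
Context (R : realType).

Lemma hullcS (S1 S2 : set R) : S1 `<=` S2 -> hullc S1 `<=` hullc S2.
Proof.
move=> S12; apply: closureS => t [a [b [S1a [S1b abt]]]].
by exists a, b; split; [exact: S12|split; [exact: S12|]].
Qed.

Lemma subset_hullc (S : set R) : S `<=` hullc S.
Proof. by move=> t St; apply: subset_closure; exists t, t; rewrite lexx. Qed.

Lemma hullc_sub_le (S : set R) (e : \bar R) :
  S `<=` [set t | (t%:E <= e)%E] -> hullc S `<=` [set t | (t%:E <= e)%E].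
Proof.
move=> Se; have closed_ray : closed [set t : R | (t%:E <= e)%E].
  case: e {Se} => [r| |].
  - by under eq_set do rewrite lee_fin; exact: closed_le.
  - by rewrite (_ : [set _ | _] = setT) ?predeqE // => t; split => // _; exact: leey.
  - rewrite (_ : [set _ | _] = set0) ?predeqE; first exact: closed0.
    by move=> t; split => //=; rewrite leeNy_eq.
rewrite [X in _ `<=` X]((closure_id _).1 closed_ray); apply: closureS.
by move=> t [a [b [_ [Sb /andP[_ tb]]]]]; apply: le_trans (Se _ Sb); rewrite lee_fin.
Qed.

End hullc.

Section modification.
Local Open Scope ereal_scope.
Context d (T : measurableType d) (R : realType) (Par : Type) (H : set Par)
  (theta : Par -> R) (P : Par -> probability T R) (A B : \bar R) (alpha : R).
Local Notation hfun := (hfun H theta P).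
Local Notation modif := (modif H theta P A B alpha).
Local Notation modif_ub := (modif_ub H theta P A B alpha).
Local Notation modif_iter := (modif_iter H theta P A B alpha).

Lemma hfun_ge U x t p : H p -> (t <= theta p)%R ->
  P p [set y | U y <= U x] <= hfun U x t.
Proof. by move=> Hp tp; apply: ereal_sup_ubound; exists p. Qed.

Lemma hfun_le U1 U2 x1 x2 :
  measurable [set y | U1 y <= U1 x1] -> measurable [set y | U2 y <= U2 x2] ->
  [set y | U1 y <= U1 x1] `<=` [set y | U2 y <= U2 x2] ->
  forall t, hfun U1 x1 t <= hfun U2 x2 t.
Proof.
move=> m1 m2 sub t; apply: ge_ereal_sup => _ [p [Hp tp] <-].
by apply: le_trans (hfun_ge _ _ Hp tp); apply: le_measure; rewrite ?inE.
Qed.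

Lemma modifS U1 U2 x1 x2 : (forall t, hfun U1 x1 t <= hfun U2 x2 t) ->
  modif U1 x1 `<=` modif U2 x2.
Proof.
move=> h12; apply: hullcS => t [At [tB aH]]; do 2 split => //.
exact: lt_le_trans aH (h12 t).
Qed.

Lemma modif_ub_ge U x t : modif U x t -> t%:E <= modif_ub U x.
Proof. by move=> Ut; apply: ereal_sup_ubound; exists t. Qed.

Section statistic.
Variable Uu : T -> \bar R.
Hypothesis mUu : measurable_fun setT Uu.

Lemma hfun_le_monotone U1 U2 x1 x2 :
  monotone_wrt Uu U1 -> monotone_wrt Uu U2 ->
  [set y | U1 y <= U1 x1] `<=` [set y | U2 y <= U2 x2] ->
  forall t, hfun U1 x1 t <= hfun U2 x2 t.
Proof.
move=> U1m U2m; apply: hfun_le; apply: measurable_sublevel.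
- exact: (monotone_wrt_measurable mUu U1m).
- exact: (monotone_wrt_measurable mUu U2m).
Qed.

Lemma modif_ub_monotone U : monotone_wrt Uu U -> monotone_wrt Uu (modif_ub U).
Proof.
move=> Um x' x le; apply: ereal_sup_le => _ [t Ut <-]; exists t => //.
apply: modifS Ut; apply: hfun_le_monotone => // y /= Uyx.
exact: le_trans Uyx (Um _ _ le).
Qed.

Lemma modif_iter_monotone k : monotone_wrt Uu (modif_iter Uu k).
Proof.
elim: k => [|k IHk] /=; [exact: monotone_wrt_refl|exact: modif_ub_monotone].
Qed.

Lemma modif_sub_modif_iter k x : modif Uu x `<=` modif (modif_iter Uu k) x.
Proof.
apply/modifS/hfun_le_monotone; [exact: monotone_wrt_refl|exact: modif_iter_monotone|].
by move=> y /=; exact: modif_iter_monotone.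
Qed.

Lemma modif_upper_set t : upper_set Uu [set x | modif Uu x t].
Proof.
move=> y y' /= Uyt le; apply: modifS Uyt; apply: hfun_le_monotone => //.
by move=> z /= Uzy; exact: le_trans Uzy le.
Qed.

Lemma upper_int_upper_set U t :
  monotone_wrt Uu U -> upper_set Uu [set x | upper_int A U x t].
Proof.
by move=> Um y y' [At tUy] le; split => //; exact: le_trans tUy (Um _ _ le).
Qed.

Lemma modif_coverage p : (0 <= alpha)%R -> H p ->
  A <= (theta p)%:E -> (theta p)%:E <= B ->
  (1 - alpha)%:E <= P p [set x | modif Uu x (theta p)].
Proof.
move=> a0 Hp At tB.
set D := [set x | P p [set y | Uu y <= Uu x] <= alpha%:E].
have lD : lower_set Uu D.
  move=> y y' /= Dy le; apply: le_trans Dy; apply: le_measure; rewrite ?inE.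
  - exact: measurable_sublevel.
  - exact: measurable_sublevel.
  - by move=> z /= Uzy; exact: le_trans Uzy le.
have PD : P p D <= alpha%:E.
  by apply: (measure_lower_set_le mUu _ lD) => //; rewrite lee_fin.
have notD_cover : ~` D `<=` [set x | modif Uu x (theta p)].
  move=> x /= /negP; rewrite -ltNge => aPx; apply: subset_hullc.
  by do 2 split => //; exact: lt_le_trans aPx (hfun_ge _ _ Hp (lexx _)).
have mD := lower_set_measurable mUu lD.
rewrite -(probability_setC_ge _ _ mD) in PD; apply: le_trans PD _.
apply: le_measure notD_cover; rewrite inE; first exact: measurableC.
by apply: (upper_set_measurable mUu); exact: modif_upper_set.
Qed.

Lemma modif_ub_measurable : measurable_fun setT (modif_ub Uu).
Proof. exact/(monotone_wrt_measurable mUu)/modif_ub_monotone/monotone_wrt_refl. Qed.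

Lemma modif_ub_exact : (0 <= alpha)%R ->
  (forall p, H p -> A <= (theta p)%:E /\ (theta p)%:E <= B) ->
  exact_upper H theta P A alpha (modif_ub Uu).
Proof.
move=> a0 hAB; apply: le_ereal_inf_tmp => _ [p Hp <-].
have [At tB] := hAB p Hp.
apply: le_trans (modif_coverage a0 Hp At tB) _; apply: le_measure; rewrite ?inE.
- by apply: (upper_set_measurable mUu); exact: modif_upper_set.
- apply: (upper_set_measurable mUu); apply: upper_int_upper_set.
  exact/modif_ub_monotone/monotone_wrt_refl.
- by move=> x /= Ux; split => //; exact: modif_ub_ge.
Qed.

Lemma class_u_hfun_le U x t : class_u H theta P A alpha Uu U ->
  U x < t%:E -> hfun Uu x t <= alpha%:E.
Proof.
move=> [_ [exU Um]] Uxt; apply: ge_ereal_sup => _ [p [Hp tp] <-].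
have mG := measurable_sublevel mUu (Uu x).
rewrite -(probability_setC_ge _ _ mG).
have coverU : (1 - alpha)%:E <= P p [set y | upper_int A U y (theta p)].
  by apply: le_trans exU _; apply: ereal_inf_lbound; exists p.
apply: le_trans coverU _; apply: le_measure; rewrite ?inE.
- by apply: (upper_set_measurable mUu); exact: upper_int_upper_set.
- exact: measurableC.
- move=> y [_ tUy] /= Uyx; have := le_trans tUy (Um _ _ Uyx).
  by rewrite leNgt (lt_le_trans Uxt) // lee_fin.
Qed.

Lemma modif_ub_le U x : class_u H theta P A alpha Uu U -> modif_ub Uu x <= U x.
Proof.
move=> cU; apply: ge_ereal_sup => _ [t + <-]; apply: hullc_sub_le => {}t.
move=> [_ [_ aH]] /=; rewrite leNgt; apply/negP => /(class_u_hfun_le cU).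
by rewrite leNgt aH.
Qed.

End statistic.
End modification.

Theorem theorem5 (d : measure_display) (T : measurableType d) (R : realType)
  (Par : Type) (H : set Par) (theta : Par -> R) (P : Par -> probability T R)
  (A B : \bar R) (alpha : R) (Uu : T -> \bar R) :
  0 <= alpha <= 1 ->
  (forall p, H p -> (A <= (theta p)%:E)%E /\ ((theta p)%:E <= B)%E) ->
  measurable_fun setT Uu ->
  (* (i) C_u^M is of level 1 - alpha *)
  ((1 - alpha)%:E <=
     ereal_inf [set P p [set x | modif H theta P A B alpha Uu x (theta p)] | p in H])%E
  /\
  (* (ii) C_u^{M oo} = C_u^M, where C_u^{M(k+1)} = modif of [A, U_u^{Mk}] *)
  (forall x, \bigcap_(k in [set: nat])
       modif H theta P A B alpha (modif_iter H theta P A B alpha Uu k) x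
     = modif H theta P A B alpha Uu x)
  /\
  (* (iii) [A, U_u^M] belongs to the class C_u and is the smallest in it *)
  (class_u H theta P A alpha Uu (modif_ub H theta P A B alpha Uu) /\
   forall U : T -> \bar R, class_u H theta P A alpha Uu U ->
     forall x, (modif_ub H theta P A B alpha Uu x <= U x)%E).
Proof.
move=> /andP[a0 _] hAB mUu; split; [|split; [|split]].
- apply: le_ereal_inf_tmp => _ [p Hp <-]; have [At tB] := hAB p Hp.
  exact: modif_coverage.
- move=> x; apply/seteqP; split => [t /(_ 0%N I) //|t Ut k _].
  exact: modif_sub_modif_iter.
- split; [exact: modif_ub_measurable|split; [exact: modif_ub_exact|]].
  exact/modif_ub_monotone/monotone_wrt_refl.
- by move=> U cU x; exact: modif_ub_le.
Qed.
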